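(* For every integer $n>0$, if hyperplanes $h_1,\dots,h_k$ in $\mathbb{R}^n$ form a skew cover of $\{\pm1\}^n$, then $k\ge n/2$.
   Context: Hyperplanes $h_i=\{x\in\mathbb{R}^n:\langle v_i,x\rangle=\mu_i\}$, $i\in[k]$, form a skew cover of $\{\pm1\}^n$ if every vertex of $\{\pm1\}^n$ lies in at least one $h_i$ and, for each $i\in[k]$, every coordinate of $v_i$ is non-zero. *)

From mathcomp Require Import all_boot all_order all_algebra.
From mathcomp Require Import reals.
Set Implicit Arguments. Unset Strict Implicit. Unset Printing Implicit Defensive.
Import Order.TTheory GRing.Theory Num.Theory.
Local Open Scope ring_scope.

Definition cube_vertex (R : realType) (n : nat) (x : 'rV[R]_n) : Prop :=
  forall j : 'I_n, x 0 j = 1 \/ x 0 j = -1.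

Definition dotv (R : realType) (n : nat) (v x : 'rV[R]_n) : R :=
  \sum_(j < n) v 0 j * x 0 j.

Definition skew_cover (R : realType) (n k : nat)
    (v : 'I_k -> 'rV[R]_n) (mu : 'I_k -> R) : Prop :=
  (forall x : 'rV[R]_n, cube_vertex x -> exists i : 'I_k, dotv (v i) x = mu i)
  /\ (forall (i : 'I_k) (j : 'I_n), v i 0 j != 0).

From mathcomp Require Import all_boot all_order all_algebra.
From mathcomp Require Import reals.
From mathcomp Require Import ring lra zify.
Import Order.TTheory GRing.Theory Num.Theory.
Local Open Scope ring_scope.
Set Implicit Arguments. Unset Strict Implicit. Unset Printing Implicit Defensive.

(* Functions on {+-1}^n are multilinear polynomials, and the polynomial
   prod_i (<v_i, x> - mu_i) vanishes on the cube, so its multilinear reduction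
   is zero.  On the other hand, multiplying a multilinear polynomial of exact
   degree m < n/2 by an affine form with nowhere-zero linear part yields one of
   exact degree m + 1: the top-degree part is obtained by the weighted up
   operator b |-> (T |-> sum_(i in T) c_i b(T \ i)), which is injective on
   level m of the Boolean lattice because ||U b||^2 = ||D b||^2 + (n - 2m)||b||^2.
   Hence k affine forms with 2k <= n multiply to a nonzero reduction. *)

Section Toggle.
Variable n : nat.
Implicit Types (S : {set 'I_n}) (j : 'I_n).

Definition toggle S j : {set 'I_n} := if j \in S then S :\ j else j |: S.

Lemma toggleK j : involutive (toggle^~ j).
Proof.
move=> S; case hj: (j \in S); rewrite /toggle hj.
- by rewrite setD11 setD1K.
- by rewrite setU11 setU1K ?hj.
Qed.

Lemma toggle_inj j : injective (toggle^~ j).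
Proof. exact: inv_inj (toggleK j). Qed.

Lemma card_toggle S j : (#|S| <= #|toggle S j|.+1)%N.
Proof.
rewrite /toggle; case: ifP => hj.
- by rewrite (cardsD1 j S) hj.
- by rewrite cardsU1 hj; lia.
Qed.

End Toggle.

Section MultilinearPolynomials.
Variables (R : realFieldType) (n : nat).
Implicit Types (S T x : {set 'I_n}) (a : {set 'I_n} -> R) (c : 'I_n -> R).

(* A vertex of the cube is encoded by the set of its -1 coordinates, and a
   multilinear polynomial by its coefficient function on monomials x^S. *)
Definition cube_sign x j : R := if j \in x then -1 else 1.

Definition character S x : R := \prod_(j in S) cube_sign x j.

Definition meval a x : R := \sum_S a S * character S x.

Lemma cube_sign_sqr x j : cube_sign x j * cube_sign x j = 1.
Proof. by rewrite /cube_sign; case: ifP => _; rewrite ?mulrNN mulr1. Qed.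

Lemma cube_sign_toggle x u j :
  cube_sign (toggle x u) j = if j == u then - cube_sign x j else cube_sign x j.
Proof.
rewrite /cube_sign /toggle; case hu: (u \in x); case: (eqVneq j u) => [->|nju].
- by rewrite setD11 hu opprK.
- by rewrite in_setD1 nju.
- by rewrite setU11 hu.
- by rewrite in_setU1 (negbTE nju).
Qed.

Lemma character_sqr S x : character S x * character S x = 1.
Proof. by rewrite /character -big_split; apply: big1 => j _; apply: cube_sign_sqr. Qed.

Lemma character_toggle S x j :
  character (toggle S j) x = cube_sign x j * character S x.
Proof.
rewrite /character /toggle; case: ifP => hj.
- rewrite [in RHS](bigD1 j) //= mulrA cube_sign_sqr mul1r.
  by apply: eq_bigl => i; rewrite in_setD1 andbC.
- rewrite (bigD1 j) ?setU11 //=; congr (_ * _); apply: eq_bigl => i.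
  by rewrite in_setU1; case: (eqVneq i j) => [->|_] /=; rewrite ?hj ?andbT.
Qed.

Lemma character_toggle_vertex S x u :
  character S (toggle x u) = (if u \in S then -1 else 1) * character S x.
Proof.
rewrite /character; case: ifP => hu.
- rewrite (bigD1 u) // [in RHS](bigD1 u) //= cube_sign_toggle eqxx mulrA mulN1r.
  congr (_ * _); apply: eq_bigr => i /andP[_ hi].
  by rewrite cube_sign_toggle (negbTE hi).
- rewrite mul1r; apply: eq_bigr => i hi; rewrite cube_sign_toggle.
  by case: eqVneq => // eiu; rewrite eiu hu in hi.
Qed.

(* Flipping a coordinate of the vertex changes the sign of exactly the
   characters that contain it. *)
Lemma character_orthogonal S T : S != T -> \sum_x character T x * character S x = 0.
Proof.
move=> nST; have [u huST] : exists u, (u \in S) != (u \in T).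
  apply/existsP; rewrite -negb_forall; apply: contra nST => /forallP hST.
  by apply/eqP/setP => u; apply/eqP/hST.
set X := \sum_x _; suff : X = - X by lra.
rewrite {1}/X (reindex_inj (@toggle_inj _ u)) /= -sumrN; apply: eq_bigr => x _.
by rewrite !character_toggle_vertex; case: (u \in S) (u \in T) huST => [] [] //= _; ring.
Qed.

Lemma meval_eq0 a : (forall x, meval a x = 0) -> forall T, a T = 0.
Proof.
move=> a0 T.
have coefT : \sum_x character T x * meval a x = a T * #|{set 'I_n}|%:R.
  rewrite /meval; under eq_bigr do rewrite mulr_sumr.
  rewrite exchange_big /= (bigD1 T) //= [X in _ + X]big1 => [|S nST].
  - under eq_bigr do rewrite mulrCA character_sqr mulr1.
    by rewrite addr0 sumr_const mulr_natr.
  - under eq_bigr do rewrite mulrCA.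
    by rewrite -mulr_sumr character_orthogonal ?mulr0.
have /eqP : a T * #|{set 'I_n}|%:R = 0.
  by rewrite -coefT big1 // => x _; rewrite a0 mulr0.
rewrite mulf_eq0 pnatr_eq0 => /orP[/eqP //|/eqP card0].
suff : (0 < #|{set 'I_n}|)%N by rewrite card0.
by apply/card_gt0P; exists set0.
Qed.

(* Multilinear reduction of (sum_j c_j x_j - m) * p: since x_j^2 = 1 on the
   cube, x_j x^S reduces to x^(toggle S j). *)
Definition mul_affine c (m : R) a T : R :=
  \sum_j c j * a (toggle T j) - m * a T.

Lemma meval_mul_affine c m a x :
  meval (mul_affine c m a) x = (\sum_j c j * cube_sign x j - m) * meval a x.
Proof.
rewrite /meval /mul_affine; under eq_bigr do rewrite mulrBl.
rewrite sumrB mulrBl; congr (_ - _); last first.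
  by rewrite mulr_sumr; apply: eq_bigr => S _; rewrite mulrA.
under eq_bigr do rewrite mulr_suml.
rewrite exchange_big /= mulr_suml; apply: eq_bigr => j _.
rewrite (reindex_inj (@toggle_inj _ j)) /= mulr_sumr; apply: eq_bigr => S _.
by rewrite toggleK character_toggle; ring.
Qed.

End MultilinearPolynomials.

Section UpDown.
Variables (R : realFieldType) (n : nat).
Implicit Types (S T : {set 'I_n}) (b z : {set 'I_n} -> R) (c : 'I_n -> R).

Definition up b S : R := \sum_(i in S) b (S :\ i).

Definition down b S : R := \sum_(j in ~: S) b (j |: S).

Lemma up_adjoint b z : \sum_S b S * up z S = \sum_S down b S * z S.
Proof.
rewrite /up /down.
under eq_bigr do rewrite mulr_sumr big_mkcond.
under [RHS]eq_bigr do rewrite mulr_suml big_mkcond.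
rewrite exchange_big [RHS]exchange_big /=; apply: eq_bigr => i _.
rewrite (reindex_inj (@toggle_inj _ i)) /=; apply: eq_bigr => S _.
rewrite /toggle in_setC; case hi: (i \in S) => /=.
- by rewrite setD11.
- by rewrite setU11 setU1K ?hi.
Qed.

Lemma setU1D1C S i j : i != j -> (j |: S) :\ i = j |: (S :\ i).
Proof.
move=> nij; apply/setP => x; rewrite !(in_setD1, in_setU1).
by case: (eqVneq x j) => [->|] //=; rewrite eq_sym nij.
Qed.

(* Both composites share the terms b (j |: (S :\ i)) with i in S, j notin S;
   they differ by the diagonal terms, counted #|~: S| and #|S| times. *)
Lemma down_up b S :
  down (up b) S + #|S|%:R * b S = up (down b) S + #|~: S|%:R * b S.
Proof.
rewrite /down /up.
have -> : \sum_(j in ~: S) \sum_(i in j |: S) b ((j |: S) :\ i)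
    = \sum_(j in ~: S) b S + \sum_(j in ~: S) \sum_(i in S) b (j |: (S :\ i)).
  rewrite -big_split; apply: eq_bigr => j; rewrite in_setC => hj.
  rewrite (bigD1 j) ?setU11 //= setU1K //; congr (_ + _).
  rewrite (eq_bigl (mem S)) => [|i]; last first.
    by rewrite in_setU1; case: (eqVneq i j) => [->|] /=; rewrite ?andbT ?andbF ?(negbTE hj).
  apply: eq_bigr => i hi; rewrite setU1D1C //.
  by apply: contraNneq hj => <-.
have -> : \sum_(i in S) \sum_(j in ~: (S :\ i)) b (j |: (S :\ i))
    = \sum_(i in S) b S + \sum_(i in S) \sum_(j in ~: S) b (j |: (S :\ i)).
  rewrite -big_split; apply: eq_bigr => i hi.
  rewrite (bigD1 i) ?in_setC ?setD11 //= setD1K //; congr (_ + _).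
  apply: eq_bigl => j; rewrite !in_setC in_setD1.
  by case: (eqVneq j i) => [->|] /=; rewrite ?andbT ?andbF ?hi.
rewrite !sumr_const !mulr_natl exchange_big /=.
by rewrite addrAC [in RHS]addrAC [b S *+ #|~: S| + _]addrC.
Qed.

Lemma sum_up_sqr b m : (forall S, b S != 0 -> #|S| = m) ->
  \sum_S up b S ^+ 2 =
    \sum_S down b S ^+ 2 + ((n - m)%:R - m%:R) * \sum_S b S ^+ 2.
Proof.
move=> bm; rewrite mulr_sumr.
have -> : \sum_S up b S ^+ 2 = \sum_S down (up b) S * b S.
  by rewrite -up_adjoint; apply: eq_bigr => S _; rewrite expr2.
have -> : \sum_S down b S ^+ 2 = \sum_S up (down b) S * b S.
  under [RHS]eq_bigr do rewrite mulrC.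
  by rewrite up_adjoint; apply: eq_bigr => S _; rewrite expr2.
rewrite -big_split; apply: eq_bigr => S _ /=.
have [->|/bm bS] := eqVneq (b S) 0; first by rewrite !(mulr0, expr0n) addr0.
have cardC : #|~: S| = (n - m)%N by have := cardsC S; rewrite card_ord; lia.
have E := down_up b S; rewrite cardC bS in E.
have -> : down (up b) S = up (down b) S + (n - m)%:R * b S - m%:R * b S.
  by rewrite -E addrK.
ring.
Qed.

Lemma up_eq0 b m : (forall S, b S != 0 -> #|S| = m) -> (2 * m < n)%N ->
  (forall T, up b T = 0) -> forall S, b S = 0.
Proof.
move=> bm ltmn ub0 S.
have c0 : 0 < (n - m)%:R - m%:R :> R by rewrite subr_gt0 ltr_nat; lia.
have sq0 : forall f : {set 'I_n} -> R, 0 <= \sum_S f S ^+ 2.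
  by move=> f; apply: sumr_ge0 => T _; apply: sqr_ge0.
have := sum_up_sqr bm; rewrite big1 => [|T _]; last by rewrite ub0 expr0n.
move=> /esym/eqP; rewrite paddr_eq0 ?sq0 ?mulr_ge0 ?sq0 ?(ltW c0) // => /andP[_].
rewrite mulf_eq0 gt_eqF //= psumr_eq0 => [/allP/(_ S)|T _]; last exact: sqr_ge0.
by rewrite mem_index_enum sqrf_eq0 => /(_ isT)/eqP.
Qed.

Lemma weighted_up_eq0 c b m : (forall j, c j != 0) ->
  (forall S, b S != 0 -> #|S| = m) -> (2 * m < n)%N ->
  (forall T, \sum_(i in T) c i * b (T :\ i) = 0) -> forall S, b S = 0.
Proof.
move=> c0 bm ltmn wub0.
have P0 S : \prod_(i in S) c i != 0 by apply/prodf_neq0 => i _.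
pose b' S := b S / \prod_(i in S) c i.
have weighted_up T : \sum_(i in T) c i * b (T :\ i) = \prod_(i in T) c i * up b' T.
  rewrite mulr_sumr; apply: eq_bigr => i hi; rewrite /b' (bigD1 i hi) /=.
  rewrite (eq_bigl (fun j => j \in T :\ i)) => [|j]; last by rewrite in_setD1 andbC.
  by rewrite -mulrA [_ * (_ / _)]mulrC divfK.
have b'0 : forall S, b' S = 0.
  apply: (@up_eq0 _ m) => // [S|T].
  - by rewrite mulf_eq0 negb_or => /andP[/bm].
  - by apply/eqP; have /eqP := wub0 T; rewrite weighted_up mulf_eq0 (negbTE (P0 T)).
by move=> S; apply/eqP; have /eqP := b'0 S; rewrite mulf_eq0 invr_eq0 (negbTE (P0 S)) orbF.
Qed.

End UpDown.

Section Degree.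
Variables (R : realFieldType) (n : nat).
Implicit Types (S T : {set 'I_n}) (a : {set 'I_n} -> R) (c : 'I_n -> R).

Definition has_degree m a :=
  (forall S, (m < #|S|)%N -> a S = 0) /\ exists S, #|S| = m /\ a S != 0.

Definition level m a S : R := if #|S| == m then a S else 0.

Lemma level_supp m a S : level m a S != 0 -> #|S| = m.
Proof. by rewrite /level; case: (#|S| =P m) => // _; rewrite eqxx. Qed.

Lemma weighted_up_level_card c m a T :
  \sum_(i in T) c i * level m a (T :\ i) != 0 -> #|T| = m.+1.
Proof.
move=> wT; apply/eqP; apply: contraNT wT => cardT; apply/eqP/big1 => i hi.
have := cardsD1 i T; rewrite hi add1n /level; case: eqP => [-> cardTi|_ _].
- by rewrite cardTi eqxx in cardT.
- by rewrite mulr0.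
Qed.

Lemma mul_affine_top c mu m a T : (forall S, (m < #|S|)%N -> a S = 0) ->
  #|T| = m.+1 -> mul_affine c mu a T = \sum_(i in T) c i * level m a (T :\ i).
Proof.
move=> am cardT; rewrite /mul_affine am ?cardT // mulr0 subr0 (bigID (mem T)) /=.
rewrite [X in _ + X]big1 ?addr0 => [|j hj]; last first.
  by rewrite /toggle (negbTE hj) am ?mulr0 // cardsU1 hj cardT.
apply: eq_bigr => i hi; rewrite /toggle hi /level.
by have := cardsD1 i T; rewrite hi cardT => -[->]; rewrite eqxx.
Qed.

Lemma has_degree_mul_affine c mu m a : (forall j, c j != 0) -> (2 * m < n)%N ->
  has_degree m a -> has_degree m.+1 (mul_affine c mu a).
Proof.
move=> c0 ltmn [am [S0 [cardS0 aS0]]]; split=> [S ltS|].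
  rewrite /mul_affine am ?mulr0 ?subr0; last by lia.
  by apply: big1 => j _; rewrite am ?mulr0 //; have := card_toggle S j; lia.
have [T wT] : exists T, \sum_(i in T) c i * level m a (T :\ i) != 0.
  apply/existsP; apply: contraT; rewrite negb_exists => /forallP wup0.
  have := @weighted_up_eq0 _ _ c (level m a) m c0 (@level_supp m a) ltmn.
  move/(_ (fun T => eqP (negbNE (wup0 T))) S0).
  by rewrite /level cardS0 eqxx => /eqP; rewrite (negbTE aS0).
have cardT := weighted_up_level_card wT.
by exists T; rewrite (mul_affine_top _ _ am cardT).
Qed.

End Degree.

Section AffineProducts.
Variables (R : realFieldType) (n k : nat) (c : 'I_k -> 'I_n -> R) (mu : 'I_k -> R).
Hypothesis c_neq0 : forall i j, c i j != 0.

Definition coef_one : {set 'I_n} -> R := fun S => (S == set0)%:R.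

Definition affine_product (s : seq 'I_k) : {set 'I_n} -> R :=
  foldr (fun i => mul_affine (c i) (mu i)) coef_one s.

Lemma meval_affine_product s x : meval (affine_product s) x =
  \prod_(i <- s) (\sum_j c i j * cube_sign R x j - mu i).
Proof.
elim: s => [|i s IHs] /=; last by rewrite meval_mul_affine IHs big_cons.
rewrite big_nil /meval (bigD1 set0) //= big1 ?addr0 => [|S /negbTE S0].
  by rewrite /coef_one eqxx mul1r /character big_set0.
by rewrite /coef_one S0 mul0r.
Qed.

Lemma has_degree_affine_product s :
  (2 * size s <= n)%N -> has_degree (size s) (affine_product s).
Proof.
elim: s => [|i s IHs] /= les.
  split=> [S|]; last by exists set0; rewrite cards0 /coef_one eqxx oner_neq0.
  by rewrite /coef_one; case: eqP => // ->; rewrite cards0.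
by apply: has_degree_mul_affine; [|lia|apply: IHs; lia].
Qed.

End AffineProducts.

Theorem mainTheorem2 (R : realType) (n k : nat) (v : 'I_k -> 'rV[R]_n)
    (mu : 'I_k -> R) :
  (0 < n)%N -> skew_cover v mu -> (n%:R / 2 <= k%:R :> R).
Proof.
move=> _ [cover v_neq0].
have [lenk|ltkn] := leqP n (2 * k).
  by rewrite ler_pdivrMr ?ltr0n // -natrM ler_nat mulnC.
pose c i j := v i 0 j.
have le2kn : (2 * size (enum 'I_k) <= n)%N by rewrite size_enum_ord; lia.
have [_ [T [_ /negP[]]]] := @has_degree_affine_product R n k c mu v_neq0 _ le2kn.
apply/eqP/meval_eq0 => x; rewrite meval_affine_product.
have [|i cover_i] := cover (\row_j cube_sign R x j).
  by move=> j; rewrite mxE /cube_sign; case: ifP => _; [right|left].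
rewrite (bigD1_seq i) ?mem_enum ?enum_uniq //=.
suff -> : \sum_j c i j * cube_sign R x j = mu i by rewrite subrr mul0r.
by rewrite -cover_i; apply: eq_bigr => j _; rewrite mxE.
Qed.
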